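(* Let $S_0=\{x\in\mathbb{C}:0<{\rm Im}(x)<\pi\}$. Then for all $x,y\in S_0$, $$s_{S_0}(x,y)\le{\rm th}(\rho_{S_0}(x,y)/2)\le(\pi/2)\,s_{S_0}(x,y),$$ and this inequality is sharp.
   Context: For a domain $G\subsetneq\mathbb{C}$, $s_G(x,y)=\frac{|x-y|}{\inf_{z\in\partial G}(|x-z|+|z-y|)}$. The hyperbolic metric of $\mathbb{H}^2=\{z:{\rm Im}\,z>0\}$ satisfies ${\rm th}(\rho_{\mathbb{H}^2}(u,v)/2)=|u-v|/|u-\overline{v}|$, and $\rho_{S_0}(x,y)=\rho_{\mathbb{H}^2}(e^x,e^y)$ ($z\mapsto e^z$ maps $S_0$ conformally onto $\mathbb{H}^2$). *)

From Stdlib Require Import Reals.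
From Coquelicot Require Import Coquelicot.
Open Scope R_scope.

Definition cexp (z : C) : C := (exp (fst z) * cos (snd z), exp (fst z) * sin (snd z)).

Definition th (t : R) : R := (exp t - exp (- t)) / (exp t + exp (- t)).
Definition artanh (r : R) : R := ln ((1 + r) / (1 - r)) / 2.

Definition cboundary (G : C -> Prop) (z : C) : Prop :=
  forall eps : R, 0 < eps ->
    (exists w, Cmod (w - z) < eps /\ G w) /\ (exists w, Cmod (w - z) < eps /\ ~ G w).

Definition s_metric (G : C -> Prop) (x y : C) : R :=
  Cmod (x - y) /
  real (Glb_Rbar (fun t => exists z, cboundary G z /\ t = Cmod (x - z) + Cmod (z - y))).

(* upper half-plane and its hyperbolic metric:
   th(rho_H(u,v)/2) = |u-v|/|u - conj v| *)
Definition rho_H (u v : C) : R := 2 * artanh (Cmod (u - v) / Cmod (u - Cconj v)).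

(* the strip S_0 = {0 < Im x < pi} and its hyperbolic metric via z |-> e^z *)
Definition S0 (x : C) : Prop := 0 < snd x < PI.
Definition rho_S0 (x y : C) : R := rho_H (cexp x) (cexp y).

(* Write x = a + i s, y = b + i t, put D = (a - b)/2, al = (s - t)/2, and let mu be
   the distance of the mean height (s + t)/2 to the boundary of S0.  Reflecting y in the
   two boundary lines shows that the infimum defining s_S0 is |x - conj y| or
   |x - conj y - 2 pi i|, whence
     s_S0(x,y)^2 = (D^2 + al^2) / (D^2 + mu^2),
   while z |-> e^z turns the half-plane formula into
     th(rho_S0(x,y)/2)^2 = (sh^2 D + sin^2 al) / (sh^2 D + sin^2 mu).
   Comparing the two quotients only needs D <= sh D, 3 (sh^2 D - D^2) <= D^2 sh^2 D, and
   that sin x / x decreases and x^2 - sin^2 x increases on [0, pi]; Jordan's inequality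
   mu <= (pi/2) sin mu produces the constant pi/2.  Points at horizontal distance 1 near
   the boundary show that 1 is sharp, and nearby points on the line Im = pi/2 show that
   pi/2 is sharp. *)

From Stdlib Require Import Reals Lra Psatz.
From Coquelicot Require Import Coquelicot.
Open Scope R_scope.

Lemma le_of_is_derive_nonneg (f f' : R -> R) (a b : R) :
  a <= b ->
  (forall x, a <= x <= b -> is_derive f x (f' x)) ->
  (forall x, a <= x <= b -> 0 <= f' x) ->
  f a <= f b.
Proof.
  intros Hab Hd Hpos.
  destruct (Req_dec a b) as [<- | Hne]; [lra |].
  destruct (MVT_cor2 f f' a b) as [c [Hfc Hc]]; [lra | |].
  - intros c Hc. apply is_derive_Reals, Hd, Hc.
  - assert (0 <= f' c) by (apply Hpos; lra). nra.
Qed.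

Lemma nonneg_of_is_derive_nonneg (f f' : R -> R) :
  f 0 = 0 ->
  (forall x, is_derive f x (f' x)) ->
  (forall x, 0 <= x -> 0 <= f' x) ->
  forall x, 0 <= x -> 0 <= f x.
Proof.
  intros H0 Hd Hpos x Hx. rewrite <- H0.
  apply (le_of_is_derive_nonneg f f'); auto.
  intros y Hy. apply Hpos. lra.
Qed.

Lemma sinh_nonneg x : 0 <= x -> 0 <= sinh x.
Proof.
  intros [Hx | <-].
  - left. rewrite <- sinh_0. now apply sinh_lt.
  - rewrite sinh_0. lra.
Qed.

Lemma sinh_ge_id x : 0 <= x -> x <= sinh x.
Proof.
  assert (Hcosh : forall u, 0 <= u -> 0 <= cosh u - 1).
  { apply (nonneg_of_is_derive_nonneg _ sinh); [rewrite cosh_0; ring | | exact sinh_nonneg].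
    intro u. unfold sinh, cosh. auto_derive; [easy | field]. }
  intros Hx. enough (0 <= sinh x - x) by lra. revert x Hx.
  apply (nonneg_of_is_derive_nonneg _ (fun u => cosh u - 1)); [rewrite sinh_0; ring | | exact Hcosh].
  intro u. unfold sinh, cosh. auto_derive; [easy | field].
Qed.

(* Four differentiations reduce this to [sinh u >= 0]. *)
Lemma cosh_sub_1_bound u : 0 <= u -> (cosh u - 1) * (12 - u ^ 2) <= 6 * u ^ 2.
Proof.
  assert (Hcosh_sinh : forall u, 0 <= u -> 0 <= u * cosh u - sinh u).
  { apply (nonneg_of_is_derive_nonneg _ (fun u => u * sinh u)); [rewrite sinh_0; ring | |].
    - intro v. unfold sinh, cosh. auto_derive; [easy | field].
    - intros v Hv. pose proof (sinh_nonneg v Hv). nra. }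
  assert (Hd2 : forall u, 0 <= u -> 0 <= 10 - 10 * cosh u + u ^ 2 * cosh u + 4 * u * sinh u).
  { apply (nonneg_of_is_derive_nonneg _
             (fun u => -6 * sinh u + 6 * u * cosh u + u ^ 2 * sinh u));
      [rewrite sinh_0, cosh_0; ring | |].
    - intro v. unfold sinh, cosh. auto_derive; [easy | field].
    - intros v Hv. pose proof (sinh_nonneg v Hv). pose proof (Hcosh_sinh v Hv). nra. }
  assert (Hd1 : forall u, 0 <= u -> 0 <= 12 * u - sinh u * (12 - u ^ 2) + 2 * u * (cosh u - 1)).
  { apply (nonneg_of_is_derive_nonneg _
             (fun u => 10 - 10 * cosh u + u ^ 2 * cosh u + 4 * u * sinh u));
      [rewrite sinh_0, cosh_0; ring | | exact Hd2].
    intro v. unfold sinh, cosh. auto_derive; [easy | field]. }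
  intros Hu. enough (0 <= 6 * u ^ 2 - (cosh u - 1) * (12 - u ^ 2)) by lra. revert u Hu.
  apply (nonneg_of_is_derive_nonneg _
           (fun u => 12 * u - sinh u * (12 - u ^ 2) + 2 * u * (cosh u - 1)));
    [rewrite cosh_0; ring | | exact Hd1].
  intro v. unfold sinh, cosh. auto_derive; [easy | field].
Qed.

Lemma sinh_sqr_Rabs x : sinh (Rabs x) ^ 2 = sinh x ^ 2.
Proof.
  unfold Rabs. destruct (Rcase_abs x); [| reflexivity].
  unfold sinh. rewrite Ropp_involutive. field.
Qed.

Lemma cosh_double_sub_1 x : cosh (2 * x) - 1 = 2 * sinh x ^ 2.
Proof.
  unfold cosh, sinh.
  replace (- (2 * x)) with (- x + - x) by ring. replace (2 * x) with (x + x) by ring.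
  rewrite !exp_plus, exp_Ropp. pose proof (exp_pos x). field. lra.
Qed.

Lemma sqr_le_sinh_sqr x : x ^ 2 <= sinh x ^ 2.
Proof.
  rewrite <- sinh_sqr_Rabs, <- pow2_abs.
  pose proof (Rabs_pos x). pose proof (sinh_ge_id (Rabs x) (Rabs_pos x)). nra.
Qed.

Lemma sinh_sqr_sub_sqr_le x : 3 * (sinh x ^ 2 - x ^ 2) <= x ^ 2 * sinh x ^ 2.
Proof.
  pose proof (cosh_sub_1_bound (2 * Rabs x)) as H.
  rewrite cosh_double_sub_1, sinh_sqr_Rabs in H.
  rewrite <- (pow2_abs x) in *. pose proof (Rabs_pos x). nra.
Qed.

Lemma sin_le_id x : 0 <= x -> sin x <= x.
Proof.
  intros [Hx | <-]; [left; now apply sin_lt_x | rewrite sin_0; lra].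
Qed.

Lemma sin_sqr_Rabs x : sin (Rabs x) ^ 2 = sin x ^ 2.
Proof.
  unfold Rabs. destruct (Rcase_abs x); [rewrite sin_neg; ring | reflexivity].
Qed.

Lemma sqr_sub_sin_sqr_le x y : 0 <= x <= y -> x ^ 2 - sin x ^ 2 <= y ^ 2 - sin y ^ 2.
Proof.
  intros Hxy.
  apply (le_of_is_derive_nonneg (fun z => z ^ 2 - sin z ^ 2) (fun z => 2 * z - sin (2 * z))); [lra | |].
  - intros z _. auto_derive; [easy |]. rewrite sin_2a. ring.
  - intros z Hz. pose proof (sin_le_id (2 * z)). lra.
Qed.

Lemma mul_cos_le_sin x : 0 <= x <= PI -> x * cos x <= sin x.
Proof.
  intros Hx. enough (sin 0 - 0 * cos 0 <= sin x - x * cos x) by (rewrite sin_0 in *; lra).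
  apply (le_of_is_derive_nonneg (fun z => sin z - z * cos z) (fun z => z * sin z)); [lra | |].
  - intros z _. auto_derive; [easy | ring].
  - intros z Hz. pose proof (sin_ge_0 z). nra.
Qed.

Lemma sin_div_antitone x y : 0 < x -> x <= y -> y <= PI -> x * sin y <= y * sin x.
Proof.
  intros Hx Hxy Hy.
  assert (Hsinc : - sin x / x <= - sin y / y).
  { apply (le_of_is_derive_nonneg (fun z => - sin z / z) (fun z => (sin z - z * cos z) / z ^ 2)); [lra | |].
    - intros z Hz. auto_derive; [lra | field; lra].
    - intros z Hz. apply Rdiv_le_0_compat; [pose proof (mul_cos_le_sin z) | ]; nra. }
  apply Rmult_le_reg_r with (/ (x * y)); [apply Rinv_0_lt_compat; nra |].
  replace (x * sin y * / (x * y)) with (sin y / y) by (field; lra).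
  replace (y * sin x * / (x * y)) with (sin x / x) by (field; lra).
  lra.
Qed.

Lemma le_mul_sin_PI2 x : 0 <= x <= PI / 2 -> x <= PI / 2 * sin x.
Proof.
  intros [[Hx | <-] Hx2]; [| rewrite sin_0; lra].
  pose proof (sin_div_antitone x (PI / 2) Hx Hx2) as H. rewrite sin_PI2 in H.
  pose proof PI2_3_2. lra.
Qed.

Lemma sin_sqr_le_sqr x : sin x ^ 2 <= x ^ 2.
Proof.
  rewrite <- sin_sqr_Rabs, <- (pow2_abs x).
  pose proof (Rabs_pos x). pose proof (SIN_bound (Rabs x)). pose proof PI2_3_2.
  destruct (Rle_dec (Rabs x) 1).
  - pose proof (sin_ge_0 (Rabs x)). pose proof (sin_le_id (Rabs x)). nra.
  - nra.
Qed.

Lemma sin_sqr_sub_sin_sqr_le al mu : Rabs al <= mu -> sin mu ^ 2 - sin al ^ 2 <= mu ^ 2 - al ^ 2.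
Proof.
  intros Hal. rewrite <- (sin_sqr_Rabs al), <- (pow2_abs al).
  pose proof (sqr_sub_sin_sqr_le (Rabs al) mu (conj (Rabs_pos al) Hal)). lra.
Qed.

Lemma sqr_mul_sin_sqr_le al mu : Rabs al <= mu <= PI -> al ^ 2 * sin mu ^ 2 <= mu ^ 2 * sin al ^ 2.
Proof.
  intros Hal. rewrite <- (sin_sqr_Rabs al), <- (pow2_abs al).
  destruct (Rabs_pos al) as [Hpos | <-]; [| simpl; nra].
  pose proof (sin_div_antitone (Rabs al) mu Hpos). pose proof (sin_ge_0 mu).
  assert (0 <= Rabs al * sin mu) by nra. nra.
Qed.

Lemma sqr_ratio_le_sinh_sin_ratio D al mu : 0 < mu <= PI / 2 -> Rabs al <= mu ->
  (D ^ 2 + al ^ 2) * (sinh D ^ 2 + sin mu ^ 2) <= (sinh D ^ 2 + sin al ^ 2) * (D ^ 2 + mu ^ 2).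
Proof.
  intros Hmu Hal. pose proof PI2_3_2.
  pose proof (sqr_le_sinh_sqr D) as Hsinh.
  pose proof (sin_sqr_sub_sin_sqr_le al mu Hal) as Hdiff.
  pose proof (sqr_mul_sin_sqr_le al mu ltac:(lra)) as Hcross.
  assert (Hal2 : al ^ 2 <= mu ^ 2) by (rewrite <- (pow2_abs al); pose proof (Rabs_pos al); nra).
  assert (Hd : D ^ 2 * (sin mu ^ 2 - sin al ^ 2) <= sinh D ^ 2 * (mu ^ 2 - al ^ 2)).
  { pose proof (pow2_ge_0 D). apply Rle_trans with (D ^ 2 * (mu ^ 2 - al ^ 2)); nra. }
  nra.
Qed.

Lemma sinh_sin_ratio_le_sqr_ratio D al mu : 0 < mu <= PI / 2 -> Rabs al <= mu ->
  (sinh D ^ 2 + sin al ^ 2) * (D ^ 2 + mu ^ 2)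
  <= (PI / 2) ^ 2 * ((D ^ 2 + al ^ 2) * (sinh D ^ 2 + sin mu ^ 2)).
Proof.
  intros Hmu Hal. pose proof PI2_3_2.
  pose proof (sqr_le_sinh_sqr D). pose proof (sinh_sqr_sub_sqr_le D).
  pose proof (sin_sqr_le_sqr al).
  pose proof (le_mul_sin_PI2 mu ltac:(lra)).
  set (k := (PI / 2) ^ 2) in *.
  set (S := sinh D ^ 2) in *. set (d := D ^ 2) in *. set (A := sin al ^ 2) in *.
  set (a := al ^ 2) in *. set (B := sin mu ^ 2). set (m := mu ^ 2).
  assert (0 <= d) by apply pow2_ge_0. assert (0 <= a) by apply pow2_ge_0.
  assert (0 <= A) by apply pow2_ge_0.
  assert (Hk : 9 / 4 <= k) by (unfold k; nra).
  assert (Hm : 0 <= m <= k) by (unfold m, k; nra).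
  assert (HmB : m <= k * B) by (unfold m, k, B; nra).
  (* After A <= a and m <= k B, what remains is m (S - d) + a d <= (k - 1) d S + k a S,
     which holds since m <= k, 3 (S - d) <= d S and k >= 3/2. *)
  assert ((S + A) * (d + m) <= (S + a) * (d + m)) by (apply Rmult_le_compat_r; lra).
  assert (d * m + a * m <= k * d * B + k * a * B) by nra.
  assert (a * d <= k * a * S) by (assert (0 <= a * S) by nra; nra).
  assert (m * (S - d) <= k * (S - d)) by nra.
  assert (k * (S - d) <= (k - 1) * d * S) by (assert (0 <= d * S) by nra; nra).
  nra.
Qed.

Lemma Cmod_pair_sub a s b t : Cmod ((a, s) - (b, t)) = sqrt ((a - b) ^ 2 + (s - t) ^ 2).
Proof. reflexivity. Qed.

Definition reflect_Im (h : R) (y : C) : C := (fst y, 2 * h - snd y).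

Lemma Cmod_sub_reflect_Im_le (z y : C) h :
  (snd z - h) * (snd y - h) <= 0 -> Cmod (z - reflect_Im h y) <= Cmod (z - y).
Proof.
  destruct z as [p q], y as [b t]. unfold Cmod, reflect_Im. simpl. intros Hside.
  apply sqrt_le_1_alt. nra.
Qed.

Lemma Cmod_sub_reflect_Im (z y : C) h : snd z = h -> Cmod (z - reflect_Im h y) = Cmod (z - y).
Proof.
  destruct z as [p q], y as [b t]. unfold Cmod, reflect_Im. simpl. intros ->.
  f_equal. ring.
Qed.

Lemma Cmod_sub_segment (x w : C) (l : R) : 0 <= l <= 1 ->
  Cmod (x - (x + l * (w - x))) + Cmod (x + l * (w - x) - w) = Cmod (x - w).
Proof.
  intros Hl.
  replace (x - (x + l * (w - x)))%C with (RtoC l * (x - w))%C by ring.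
  replace (x + l * (w - x) - w)%C with (RtoC (1 - l) * (x - w))%C
    by (rewrite RtoC_minus; ring).
  rewrite !Cmod_mult, !Cmod_R, !Rabs_pos_eq by lra. ring.
Qed.

Lemma reflect_Im_segment (x y : C) h : 0 < (snd x - h) * (snd y - h) ->
  exists z, snd z = h /\ Cmod (x - z) + Cmod (z - y) = Cmod (x - reflect_Im h y).
Proof.
  intros Hside.
  set (l := (snd x - h) / ((snd x - h) + (snd y - h))).
  pose proof (pow2_ge_0 (snd x - h)). pose proof (pow2_ge_0 (snd y - h)).
  assert (Hsum : 0 < ((snd x - h) + (snd y - h)) ^ 2) by nra.
  assert (Hl : 0 <= l <= 1).
  { replace l with ((snd x - h) * ((snd x - h) + (snd y - h)) / ((snd x - h) + (snd y - h)) ^ 2)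
      by (unfold l; field; nra).
    split; [apply Rdiv_le_0_compat | rewrite <- Rdiv_le_1 by exact Hsum]; nra. }
  exists (x + l * (reflect_Im h y - x))%C.
  assert (Hz : snd (x + l * (reflect_Im h y - x))%C = h).
  { destruct x as [a s], y as [b t]. unfold l, reflect_Im in *. simpl in *. field. nra. }
  split; [exact Hz |].
  rewrite <- (Cmod_sub_reflect_Im _ y h Hz). apply Cmod_sub_segment, Hl.
Qed.

Lemma S0_boundary_Im z : cboundary S0 z -> snd z <= 0 \/ PI <= snd z.
Proof.
  intros Hb.
  destruct (Rle_dec (snd z) 0) as [| Hpos]; [now left |].
  destruct (Rle_dec PI (snd z)) as [| Hlt]; [now right |].
  exfalso.
  destruct (Hb (Rmin (snd z) (PI - snd z))) as [_ [w [Hw Hnw]]]; [apply Rmin_case; lra |].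
  apply Hnw.
  assert (Habs : Rabs (snd w - snd z) < Rmin (snd z) (PI - snd z)).
  { eapply Rle_lt_trans; [| exact Hw]. eapply Rle_trans; [| apply Rmax_Cmod]. apply Rmax_r. }
  pose proof (Rmin_l (snd z) (PI - snd z)). pose proof (Rmin_r (snd z) (PI - snd z)).
  apply Rabs_def2 in Habs. unfold S0. lra.
Qed.

Lemma S0_boundary_of_Im z : snd z = 0 \/ snd z = PI -> cboundary S0 z.
Proof.
  destruct z as [p q]. simpl. intros Hq eps Heps.
  pose proof PI_RGT_0.
  set (r := Rmin (eps / 2) (PI / 2)).
  assert (Hr : 0 < r <= eps / 2 /\ r <= PI / 2).
  { unfold r. split; [split |]; [apply Rmin_case; lra | apply Rmin_l | apply Rmin_r]. }
  assert (Hnear : forall r', Rabs r' = r -> Cmod ((p, q + r') - (p, q)) < eps).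
  { intros r' Hr'. rewrite Cmod_pair_sub.
    replace ((p - p) ^ 2 + (q + r' - q) ^ 2) with (Rabs r' ^ 2) by (rewrite pow2_abs; ring).
    rewrite sqrt_pow2 by apply Rabs_pos. lra. }
  assert (Hr_pos : Rabs r = r) by (apply Rabs_pos_eq; lra).
  assert (Hr_neg : Rabs (- r) = r) by (rewrite Rabs_Ropp; exact Hr_pos).
  unfold S0. simpl.
  destruct Hq as [-> | ->]; split.
  - exists (p, 0 + r). split; [now apply Hnear | simpl; lra].
  - exists (p, 0 + - r). split; [now apply Hnear | simpl; lra].
  - exists (p, PI + - r). split; [now apply Hnear | simpl; lra].
  - exists (p, PI + r). split; [now apply Hnear | simpl; lra].
Qed.

Lemma S0_boundary_sum_glb x y : S0 x -> S0 y ->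
  real (Glb_Rbar (fun e => exists z, cboundary S0 z /\ e = Cmod (x - z) + Cmod (z - y)))
  = Rmin (Cmod (x - reflect_Im 0 y)) (Cmod (x - reflect_Im PI y)).
Proof.
  intros Hx Hy. unfold S0 in Hx, Hy.
  set (E := fun e => exists z, cboundary S0 z /\ e = Cmod (x - z) + Cmod (z - y)).
  assert (Hlow : forall h z, (snd z - h) * (snd y - h) <= 0 ->
            Cmod (x - reflect_Im h y) <= Cmod (x - z) + Cmod (z - y)).
  { intros h z Hz.
    eapply Rle_trans; [| apply Rplus_le_compat_l, (Cmod_sub_reflect_Im_le z y h Hz)].
    replace (x - reflect_Im h y)%C with ((x - z) + (z - reflect_Im h y))%C by ring.
    apply Cmod_triangle. }
  assert (Hattained : forall h, h = 0 \/ h = PI -> 0 < (snd x - h) * (snd y - h) ->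
            E (Cmod (x - reflect_Im h y))).
  { intros h Hh Hside.
    destruct (reflect_Im_segment x y h Hside) as [z [Hz Hsum]].
    exists z. split; [apply S0_boundary_of_Im; now rewrite Hz | now rewrite Hsum]. }
  assert (Hglb : is_glb_Rbar E (Rmin (Cmod (x - reflect_Im 0 y)) (Cmod (x - reflect_Im PI y)))).
  { split.
    - intros e [z [Hz ->]]. simpl.
      destruct (S0_boundary_Im z Hz).
      + eapply Rle_trans; [apply Rmin_l | apply Hlow; nra].
      + eapply Rle_trans; [apply Rmin_r | apply Hlow; nra].
    - intros l Hl. apply Rmin_case; apply Hl, Hattained; auto; nra. }
  now rewrite (is_glb_Rbar_unique E _ Hglb).
Qed.

Definition edge_dist (h : R) : R := Rmin h (PI - h).

Lemma sin_sqr_edge_dist h : sin (edge_dist h) ^ 2 = sin h ^ 2.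
Proof. unfold edge_dist. apply Rmin_case; [reflexivity | now rewrite sin_PI_x]. Qed.

Lemma edge_dist_bounds s t : 0 < s < PI -> 0 < t < PI ->
  0 < edge_dist ((s + t) / 2) <= PI / 2 /\ Rabs ((s - t) / 2) <= edge_dist ((s + t) / 2).
Proof.
  intros Hs Ht. unfold edge_dist.
  split; [split; [apply Rmin_case | apply Rmin_case_strong] |
          apply Rmin_case; apply Rabs_le]; lra.
Qed.

Lemma sqrt_div_scale k X Y : 0 < k -> 0 < Y -> sqrt (k * X) / sqrt (k * Y) = sqrt X / sqrt Y.
Proof.
  intros Hk HY. rewrite !sqrt_mult_alt by lra.
  pose proof (sqrt_lt_R0 k Hk). pose proof (sqrt_lt_R0 Y HY). field. split; lra.
Qed.

Lemma s_metric_S0_formula a s b t : S0 (a, s) -> S0 (b, t) ->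
  s_metric S0 (a, s) (b, t)
  = sqrt (((a - b) / 2) ^ 2 + ((s - t) / 2) ^ 2)
    / sqrt (((a - b) / 2) ^ 2 + edge_dist ((s + t) / 2) ^ 2).
Proof.
  intros Hx Hy. unfold s_metric. rewrite S0_boundary_sum_glb by assumption.
  unfold S0 in Hx, Hy. simpl in Hx, Hy.
  destruct (edge_dist_bounds s t Hx Hy) as [Hmu _].
  unfold reflect_Im. cbn [fst snd]. rewrite !Cmod_pair_sub.
  set (D := (a - b) / 2). set (sg := (s + t) / 2) in *.
  replace ((a - b) ^ 2 + (s - t) ^ 2) with (4 * (D ^ 2 + ((s - t) / 2) ^ 2))
    by (unfold D; field).
  replace ((a - b) ^ 2 + (s - (2 * 0 - t)) ^ 2) with (4 * (D ^ 2 + sg ^ 2))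
    by (unfold D, sg; field).
  replace ((a - b) ^ 2 + (s - (2 * PI - t)) ^ 2) with (4 * (D ^ 2 + (PI - sg) ^ 2))
    by (unfold D, sg; field).
  replace (Rmin (sqrt (4 * (D ^ 2 + sg ^ 2))) (sqrt (4 * (D ^ 2 + (PI - sg) ^ 2))))
    with (sqrt (4 * (D ^ 2 + edge_dist sg ^ 2))).
  - apply sqrt_div_scale; [lra |]. pose proof (pow2_ge_0 D). nra.
  - unfold edge_dist. assert (0 < sg < PI) by (unfold sg; lra).
    destruct (Rle_dec sg (PI - sg)).
    + rewrite (Rmin_left sg), Rmin_left by (try apply sqrt_le_1_alt; nra). reflexivity.
    + rewrite (Rmin_right sg), Rmin_right by (try apply sqrt_le_1_alt; nra). reflexivity.
Qed.

Lemma Cconj_cexp b t : Cconj (cexp (b, t)) = cexp (b, - t).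
Proof. unfold Cconj, cexp. simpl. rewrite cos_neg, sin_neg. f_equal. ring. Qed.

Lemma exp_sub_sqr a b : (exp a - exp b) ^ 2 = 4 * exp a * exp b * sinh ((a - b) / 2) ^ 2.
Proof.
  unfold sinh. set (c := (a + b) / 2). set (D := (a - b) / 2).
  replace a with (c + D) by (unfold c, D; field).
  replace b with (c + - D) by (unfold c, D; field).
  replace ((c + D - (c + - D)) / 2) with D by field.
  rewrite !exp_plus, exp_Ropp. pose proof (exp_pos D). field. lra.
Qed.

Lemma Cmod_cexp_sub a s b t : Cmod (cexp (a, s) - cexp (b, t))
  = sqrt (4 * exp a * exp b * (sinh ((a - b) / 2) ^ 2 + sin ((s - t) / 2) ^ 2)).
Proof.
  unfold cexp. cbn [fst snd]. rewrite Cmod_pair_sub. f_equal.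
  assert (Hcos : cos s * cos t + sin s * sin t = 1 - 2 * sin ((s - t) / 2) ^ 2).
  { rewrite <- cos_minus. replace (s - t) with (2 * ((s - t) / 2)) at 1 by field.
    rewrite cos_2a_sin. ring. }
  assert (Hpyth : forall x, sin x ^ 2 + cos x ^ 2 = 1).
  { intro x. rewrite <- (sin2_cos2 x). unfold Rsqr. ring. }
  transitivity (exp a ^ 2 * (sin s ^ 2 + cos s ^ 2) + exp b ^ 2 * (sin t ^ 2 + cos t ^ 2)
                - 2 * exp a * exp b * (cos s * cos t + sin s * sin t)); [ring |].
  rewrite Hcos, !Hpyth, Rmult_plus_distr_l, <- exp_sub_sqr. ring.
Qed.

Lemma Cmod_sub_lt_Cmod_sub_Cconj u v : 0 < snd u -> 0 < snd v ->
  Cmod (u - v) < Cmod (u - Cconj v).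
Proof.
  destruct u as [p q], v as [b t]. simpl. intros Hq Ht.
  change (Cconj (b, t)) with (b, - t). rewrite !Cmod_pair_sub.
  pose proof (pow2_ge_0 (p - b)). pose proof (pow2_ge_0 (q - t)).
  apply sqrt_lt_1_alt. split; nra.
Qed.

Lemma th_artanh r : -1 < r < 1 -> th (2 * artanh r / 2) = r.
Proof.
  intros Hr. replace (2 * artanh r / 2) with (artanh r) by field.
  unfold th, artanh. set (q := (1 + r) / (1 - r)).
  assert (Hq : 0 < q) by (unfold q; apply Rdiv_lt_0_compat; lra).
  set (e := exp (ln q / 2)).
  assert (He : e * e = q).
  { unfold e. rewrite <- exp_plus. replace (ln q / 2 + ln q / 2) with (ln q) by field.
    now apply exp_ln. }
  assert (Hep : 0 < e) by apply exp_pos.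
  rewrite exp_Ropp. fold e.
  replace ((e - / e) / (e + / e)) with ((e * e - 1) / (e * e + 1)) by (field; nra).
  rewrite He. unfold q. field. lra.
Qed.

Lemma th_half_rho_H u v : 0 < snd u -> 0 < snd v ->
  th (rho_H u v / 2) = Cmod (u - v) / Cmod (u - Cconj v).
Proof.
  intros Hu Hv. unfold rho_H. apply th_artanh.
  pose proof (Cmod_sub_lt_Cmod_sub_Cconj u v Hu Hv). pose proof (Cmod_ge_0 (u - v)).
  split.
  - apply Rlt_le_trans with 0; [lra | apply Rdiv_le_0_compat; lra].
  - rewrite <- Rdiv_lt_1 by lra. lra.
Qed.

Lemma cexp_Im_pos x : S0 x -> 0 < snd (cexp x).
Proof.
  destruct x as [a s]. unfold S0, cexp. simpl. intros Hs.
  apply Rmult_lt_0_compat; [apply exp_pos | apply sin_gt_0; lra].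
Qed.

Lemma th_rho_S0_lt_1 x y : S0 x -> S0 y -> th (rho_S0 x y / 2) < 1.
Proof.
  intros Hx Hy. pose proof (cexp_Im_pos x Hx). pose proof (cexp_Im_pos y Hy).
  unfold rho_S0. rewrite th_half_rho_H by assumption.
  pose proof (Cmod_sub_lt_Cmod_sub_Cconj (cexp x) (cexp y)). pose proof (Cmod_ge_0 (cexp x - cexp y)).
  rewrite <- Rdiv_lt_1 by lra. lra.
Qed.

Lemma th_rho_S0_formula a s b t : S0 (a, s) -> S0 (b, t) ->
  th (rho_S0 (a, s) (b, t) / 2)
  = sqrt (sinh ((a - b) / 2) ^ 2 + sin ((s - t) / 2) ^ 2)
    / sqrt (sinh ((a - b) / 2) ^ 2 + sin ((s + t) / 2) ^ 2).
Proof.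
  intros Hx Hy. unfold rho_S0.
  rewrite th_half_rho_H by (apply cexp_Im_pos; assumption).
  rewrite Cconj_cexp, !Cmod_cexp_sub.
  replace ((s - - t) / 2) with ((s + t) / 2) by field.
  unfold S0 in Hx, Hy. simpl in Hx, Hy.
  pose proof (exp_pos a). pose proof (exp_pos b).
  assert (0 < sin ((s + t) / 2)) by (apply sin_gt_0; lra).
  apply sqrt_div_scale; [| pose proof (pow2_ge_0 (sinh ((a - b) / 2)))]; nra.
Qed.

Lemma sqrt_div_le_scale c X1 Y1 X2 Y2 :
  0 <= c -> 0 <= X1 -> 0 < Y1 -> 0 <= X2 -> 0 < Y2 ->
  X1 * Y2 <= c ^ 2 * (X2 * Y1) -> sqrt X1 / sqrt Y1 <= c * (sqrt X2 / sqrt Y2).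
Proof.
  intros Hc HX1 HY1 HX2 HY2 H.
  rewrite <- !sqrt_div_alt, <- (sqrt_pow2 c), <- sqrt_mult_alt by nra.
  apply sqrt_le_1_alt.
  apply Rmult_le_reg_r with (Y1 * Y2); [nra |].
  replace (X1 / Y1 * (Y1 * Y2)) with (X1 * Y2) by (field; lra).
  replace (c ^ 2 * (X2 / Y2) * (Y1 * Y2)) with (c ^ 2 * (X2 * Y1)) by (field; lra).
  exact H.
Qed.

Lemma scale_sqrt_div_lt c X1 Y1 X2 Y2 :
  0 <= c -> 0 <= X1 -> 0 < Y1 -> 0 <= X2 -> 0 < Y2 ->
  c ^ 2 * (X1 * Y2) < X2 * Y1 -> c * (sqrt X1 / sqrt Y1) < sqrt X2 / sqrt Y2.
Proof.
  intros Hc HX1 HY1 HX2 HY2 H.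
  rewrite <- !sqrt_div_alt, <- (sqrt_pow2 c), <- sqrt_mult_alt by nra.
  apply sqrt_lt_1_alt. split; [apply Rmult_le_pos; [nra | apply Rdiv_le_0_compat; lra] |].
  apply Rmult_lt_reg_r with (Y1 * Y2); [nra |].
  replace (X2 / Y2 * (Y1 * Y2)) with (X2 * Y1) by (field; lra).
  replace (c ^ 2 * (X1 / Y1) * (Y1 * Y2)) with (c ^ 2 * (X1 * Y2)) by (field; lra).
  exact H.
Qed.

Lemma th_rho_S0_bounds x y : S0 x -> S0 y ->
  s_metric S0 x y <= th (rho_S0 x y / 2) /\ th (rho_S0 x y / 2) <= PI / 2 * s_metric S0 x y.
Proof.
  destruct x as [a s], y as [b t]. intros Hx Hy.
  rewrite s_metric_S0_formula, th_rho_S0_formula by assumption.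
  unfold S0 in Hx, Hy. simpl in Hx, Hy.
  destruct (edge_dist_bounds s t Hx Hy) as [Hmu Hal].
  rewrite <- (sin_sqr_edge_dist ((s + t) / 2)).
  set (D := (a - b) / 2). set (al := (s - t) / 2) in *. set (mu := edge_dist _) in *.
  assert (0 < sin mu) by (apply sin_gt_0; lra).
  pose proof (pow2_ge_0 D). pose proof (pow2_ge_0 al).
  pose proof (pow2_ge_0 (sinh D)). pose proof (pow2_ge_0 (sin al)). pose proof PI_RGT_0.
  split.
  - rewrite <- (Rmult_1_l (sqrt (sinh D ^ 2 + _) / _)).
    apply sqrt_div_le_scale; try nra.
    rewrite pow1, Rmult_1_l. now apply sqr_ratio_le_sinh_sin_ratio.
  - apply sqrt_div_le_scale; try nra.
    now apply sinh_sin_ratio_le_sqr_ratio.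
Qed.

Lemma th_rho_S0_sharp_lower c : 1 < c ->
  exists x y : C, S0 x /\ S0 y /\ x <> y /\ th (rho_S0 x y / 2) < c * s_metric S0 x y.
Proof.
  intros Hc. pose proof PI2_3_2.
  set (e := Rmin (1 / 2) ((c - 1) / 4)).
  assert (He : 0 < e <= 1 / 2 /\ e <= (c - 1) / 4).
  { unfold e. split; [split |]; [apply Rmin_case; lra | apply Rmin_l | apply Rmin_r]. }
  assert (Hx : S0 (0, e)) by (unfold S0; simpl; lra).
  assert (Hy : S0 (1, e)) by (unfold S0; simpl; lra).
  exists (0, e), (1, e). split; [exact Hx | split; [exact Hy | split]].
  - intros Heq. injection Heq. lra.
  - apply Rlt_le_trans with 1; [now apply th_rho_S0_lt_1 |].
    rewrite s_metric_S0_formula by assumption.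
    replace ((e + e) / 2) with e by field. replace ((e - e) / 2) with 0 by field.
    unfold edge_dist. rewrite Rmin_left by lra.
    pose proof (sqrt_div_le_scale c 1 1 (((0 - 1) / 2) ^ 2 + 0 ^ 2) (((0 - 1) / 2) ^ 2 + e ^ 2))
      as Hratio.
    rewrite sqrt_1, Rdiv_1_r in Hratio. apply Hratio; nra.
Qed.

Lemma exists_sinh_sqr_ratio_gt c : 0 <= c < PI / 2 ->
  exists d, 0 < d /\ c ^ 2 * (d ^ 2 * (sinh d ^ 2 + 1)) < sinh d ^ 2 * (d ^ 2 + (PI / 2) ^ 2).
Proof.
  intros Hc. pose proof PI2_3_2.
  set (K := (PI / 2) ^ 2 - c ^ 2).
  assert (HK : 0 < K) by (unfold K; nra).
  set (d := Rmin 1 (K / (2 * (c ^ 2 + 1)))).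
  assert (Hd : 0 < d <= 1 /\ d <= K / (2 * (c ^ 2 + 1))).
  { unfold d. split; [split |];
      [apply Rmin_case; [lra | apply Rdiv_lt_0_compat; nra] | apply Rmin_l | apply Rmin_r]. }
  exists d. split; [lra |].
  assert (Hcd : (c ^ 2 + 1) * d <= K / 2).
  { replace (K / 2) with ((c ^ 2 + 1) * (K / (2 * (c ^ 2 + 1)))) by (field; nra).
    apply Rmult_le_compat_l; nra. }
  assert (HK' : 0 < d ^ 2 + (PI / 2) ^ 2 - c ^ 2 * d ^ 2 - c ^ 2) by (unfold K in *; nra).
  pose proof (sqr_le_sinh_sqr d).
  assert (c ^ 2 * d ^ 2 < sinh d ^ 2 * (d ^ 2 + (PI / 2) ^ 2 - c ^ 2 * d ^ 2)).
  { assert (0 < d ^ 2) by nra.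
    apply Rlt_le_trans with (d ^ 2 * (d ^ 2 + (PI / 2) ^ 2 - c ^ 2 * d ^ 2)); [nra |].
    apply Rmult_le_compat_r; nra. }
  nra.
Qed.

Lemma th_rho_S0_sharp_upper c : c < PI / 2 ->
  exists x y : C, S0 x /\ S0 y /\ x <> y /\ c * s_metric S0 x y < th (rho_S0 x y / 2).
Proof.
  intros Hc. pose proof PI2_3_2.
  set (c0 := Rmax c 0).
  assert (Hc0 : 0 <= c0 < PI / 2 /\ c <= c0).
  { unfold c0. split; [split |]; [apply Rmax_r | apply Rmax_case; lra | apply Rmax_l]. }
  destruct (exists_sinh_sqr_ratio_gt c0 (proj1 Hc0)) as [d [Hd Hratio]].
  assert (Hx : S0 (0, PI / 2)) by (unfold S0; simpl; lra).
  assert (Hy : S0 (- 2 * d, PI / 2)) by (unfold S0; simpl; lra).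
  exists (0, PI / 2), (- 2 * d, PI / 2). split; [exact Hx | split; [exact Hy | split]].
  { intros Heq. injection Heq. lra. }
  rewrite s_metric_S0_formula, th_rho_S0_formula by assumption.
  replace ((PI / 2 + PI / 2) / 2) with (PI / 2) by field.
  replace ((PI / 2 - PI / 2) / 2) with 0 by field.
  replace ((0 - - 2 * d) / 2) with d by field.
  unfold edge_dist. rewrite Rmin_left by lra. rewrite sin_0, sin_PI2.
  assert (Hs : 0 <= sqrt (d ^ 2 + 0 ^ 2) / sqrt (d ^ 2 + (PI / 2) ^ 2)).
  { apply Rdiv_le_0_compat; [apply sqrt_pos | apply sqrt_lt_R0; nra]. }
  apply Rle_lt_trans with (c0 * (sqrt (d ^ 2 + 0 ^ 2) / sqrt (d ^ 2 + (PI / 2) ^ 2)));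
    [apply Rmult_le_compat_r; lra |].
  pose proof (pow2_ge_0 (sinh d)).
  apply scale_sqrt_div_lt; nra.
Qed.

Theorem theorem4p10 :
  (forall x y : C, S0 x -> S0 y ->
     s_metric S0 x y <= th (rho_S0 x y / 2) /\
     th (rho_S0 x y / 2) <= (PI / 2) * s_metric S0 x y) /\
  (* sharpness of the lower constant 1 *)
  (forall c : R, 1 < c ->
     exists x y : C, S0 x /\ S0 y /\ x <> y /\
       th (rho_S0 x y / 2) < c * s_metric S0 x y) /\
  (* sharpness of the upper constant pi/2 *)
  (forall c : R, c < PI / 2 ->
     exists x y : C, S0 x /\ S0 y /\ x <> y /\
       c * s_metric S0 x y < th (rho_S0 x y / 2)).
Proof.
  split; [| split].
  - exact th_rho_S0_bounds.
  - exact th_rho_S0_sharp_lower.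
  - exact th_rho_S0_sharp_upper.
Qed.
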